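(* Let $T>0$, $\tau>0$ and $x\in L^\infty(-\tau,T)$. For $t\in[0,T]$ let $x_t(s)=x(t-s)$, $s\in[0,\tau]$, and for $k>0$ let $\mathrm{LIE}_k(x_t)=\frac1k\log\big(\int_{t-\tau}^t\exp(k\,x(s))\,\mathrm{d}s\big)$. Then for every $p\in[1,\infty)$, \[ \int_0^T\big|\operatorname*{ess\,sup}x_t-\mathrm{LIE}_k(x_t)\big|^p\,\mathrm{d}t\to0\qquad\text{as }k\to\infty, \] where $\operatorname*{ess\,sup}x_t$ is the essential supremum of $x_t$ over $[0,\tau]$. *)

From HB Require Import structures.
From mathcomp Require Import all_boot all_order all_algebra.
From mathcomp Require Import all_classical all_reals all_analysis.
Set Implicit Arguments. Unset Strict Implicit. Unset Printing Implicit Defensive.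
Import Order.TTheory GRing.Theory Num.Theory.
Import numFieldNormedType.Exports.
Local Open Scope classical_set_scope.
Local Open Scope ring_scope.

Definition ess_sup_on {R : realType} (D : set R) (f : R -> R) : \bar R :=
  ereal_inf [set y : \bar R |
    {ae (@lebesgue_measure R), forall s, D s -> ((f s)%:E <= y)%E}].

Definition seg {R : realType} (x : R -> R) (t : R) : R -> R := fun s => x (t - s).

Definition LIE {R : realType} (k tau : R) (x : R -> R) (t : R) : R :=
  k^-1 * ln (fine (\int[@lebesgue_measure R]_(s in `[t - tau, t]%classic)
                      (expR (k * x s))%:E)).

(* Reflecting s |-> t - s turns x_t on [0, tau] into x on the window
   W = [t - tau, t], so ess sup x_t = e is the essential supremum of x on W.
   If |x| <= M a.e. and A_eps = {s in W | x s > e - eps}, which has positive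
   measure, then
     exp (k (e - eps)) |A_eps| <= \int_W exp (k x) <= exp (k e) tau,
   hence LIE_k(x_t) -> e for every t, and |e - LIE_k(x_t)| <= 2 M + |ln tau|
   for k >= 1.  Dominated convergence on [0, T] concludes; the window
   integrals are measurable in t by Fubini-Tonelli. *)

From HB Require Import structures.
From mathcomp Require Import all_boot all_order all_algebra.
From mathcomp Require Import all_classical all_reals all_analysis.
From mathcomp Require Import measurable_realfun ring lra.
Set Implicit Arguments.
Unset Strict Implicit.
Unset Printing Implicit Defensive.
Import Order.TTheory GRing.Theory Num.Theory.
Import numFieldNormedType.Exports.
Local Open Scope classical_set_scope.
Local Open Scope ring_scope.

(* Not found by instance resolution through the canonical measurable structure of [R]. *)
#[local] Instance lebesgue_ae_filter (R : realType) :
  Filter (nbhs (almost_everywhere (@lebesgue_measure R))) :=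
  ae_filter_ringOfSetsType _.

Section reflection.
Variable R : realType.
Local Notation mu := (@lebesgue_measure R).

Lemma lebesgue_measure_reflect (t : R) (A : set R) : measurable A ->
  mu ((fun u => t - u) @^-1` A) = mu A.
Proof.
move=> mA; pose refl : measurableTypeR R -> measurableTypeR R := fun u => t - u.
have mrefl : measurable_fun setT refl by exact: measurable_funB.
rewrite (@lebesgue_measure_unique R
  (measure_function_pushforward__canonical__measure_function_Measure mu mrefl) _ A mA) //.
move=> _ /ocitvP[->|[[a b] /= ab ->]]; first by rewrite /= /pushforward preimage_set0.
rewrite /= /pushforward.
have -> : refl @^-1` `]a, b]%classic = `[t - b, t - a[%classic.
  by apply/seteqP; split => u /=; rewrite /refl !in_itv /= => /andP[? ?]; apply/andP; split; lra.
rewrite !lebesgue_measure_itv /= !lte_fin ab ltrD2l ltrN2 ab.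
by rewrite -!EFinD; congr EFin; lra.
Qed.

Lemma ae_reflect (t : R) (P : R -> Prop) :
  {ae mu, forall u, P u} -> {ae mu, forall s, P (t - s)}.
Proof.
move=> [A [mA A0 PA]].
have mrefl : measurable_fun setT (fun u : R => t - u) by exact: measurable_funB.
exists ((fun u => t - u) @^-1` A); split.
- by rewrite -[X in measurable X]setTI; exact: mrefl.
- by rewrite lebesgue_measure_reflect.
- by move=> s /= nP; apply: PA.
Qed.

Lemma ess_sup_on_reflect (t : R) (D : set R) (f : R -> R) :
  ess_sup_on D (fun s => f (t - s)) = ess_sup_on ((fun u => t - u) @^-1` D) f.
Proof.
rewrite /ess_sup_on; congr ereal_inf; apply/seteqP; split => y /=.
- by move=> /(ae_reflect t); apply: filterS => u h /= Du; rewrite -[u](subKr t); apply: h.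
- by move=> /(ae_reflect t); apply: filterS => s h Ds; apply: h; rewrite /= subKr.
Qed.

Lemma ae_itv_oo_cc (a b : R) (P : R -> Prop) :
  {ae mu, forall s, `]a, b[%classic s -> P s} ->
  {ae mu, forall s, `[a, b]%classic s -> P s}.
Proof.
have neq (c : R) : {ae mu, forall s, s <> c}.
  exists [set c]; split => //; first by rewrite lebesgue_measure_set1.
  by move=> s /= /contrapT.
move: (neq a) (neq b); apply: filterS3 => s sa sb Ps.
rewrite /= in_itv /= => /andP[aS Sb]; apply: Ps.
rewrite /= in_itv /= !lt_neqAle aS Sb !andbT.
by apply/andP; split; apply/eqP => e; [apply: sa | apply: sb].
Qed.

End reflection.

Lemma ess_sup_on_seg {R : realType} (x : R -> R) (tau t : R) :
  ess_sup_on `[0, tau] (seg x t) = ess_sup_on `[t - tau, t] x.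
Proof.
rewrite /seg ess_sup_on_reflect; congr ess_sup_on.
by apply/seteqP; split => u /=; rewrite !in_itv /= => /andP[? ?]; apply/andP; split; lra.
Qed.

Section ess_sup_on_bounded.
Variables (R : realType) (D : set R) (f : R -> R) (M : R).
Local Notation mu := (@lebesgue_measure R).
Hypothesis mD : measurable D.
Hypothesis muD_gt0 : (0 < mu D)%E.
Hypothesis f_bnd : {ae mu, forall s, D s -> `|f s| <= M}.

Let ae_le_bound : {ae mu, forall s, D s -> ((f s)%:E <= M%:E)%E}.
Proof.
move: f_bnd; apply: filterS => s fM Ds.
by rewrite lee_fin; apply: ler_normlW; apply: fM.
Qed.

Lemma ess_sup_on_le : (ess_sup_on D f <= M%:E)%E.
Proof. exact: ereal_inf_lbound ae_le_bound. Qed.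

Lemma ess_sup_on_ge : ((- M)%:E <= ess_sup_on D f)%E.
Proof.
apply/ereal_infP => y fy; rewrite leNgt; apply/negP => yM.
have : {ae mu, forall s, D s -> False}.
  move: fy f_bnd; apply: filterS2 => s fsy fsM Ds.
  have := le_lt_trans (fsy Ds) yM; rewrite lte_fin => fs_lt.
  by move: (fsM Ds); rewrite ler_norml => /andP[/le_lt_trans/(_ fs_lt)]; rewrite ltxx.
move=> nD; have muD0 : mu D = 0.
  by apply/negligibleP => //; apply: negligibleS nD => s Ds; apply.
by move: muD_gt0; rewrite muD0 ltxx.
Qed.

Lemma ess_sup_on_fin_num : ess_sup_on D f \is a fin_num.
Proof.
rewrite fin_numElt (lt_le_trans _ ess_sup_on_ge) ?ltNyr //.
by rewrite (le_lt_trans ess_sup_on_le) ?ltry.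
Qed.

Lemma ae_le_ess_sup_on : {ae mu, forall s, D s -> f s <= fine (ess_sup_on D f)}.
Proof.
rewrite /ess_sup_on; set I := (X in ereal_inf X).
have [|u uI uinf] := @ereal_inf_seq R I.
  by apply/set0P; exists M%:E; exact: ae_le_bound.
have : {ae mu, forall s n, D s -> ((f s)%:E <= u n)%E} by apply: ae_foralln.
apply: filterS => s fu Ds; rewrite -lee_fin fineK ?ess_sup_on_fin_num //.
rewrite -(cvg_lim _ uinf) //.
by apply: lime_ge; [apply/cvgP: uinf | apply: nearW => n; apply: fu].
Qed.

Lemma ess_sup_on_superlevel_gt0 (eps : R) : measurable_fun D f -> 0 < eps ->
  (0 < mu (D `&` f @^-1` `](fine (ess_sup_on D f) - eps)%R, +oo[))%E.
Proof.
move=> mf eps0; rewrite lt0e measure_ge0 andbT; apply/negP => /eqP A0.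
have : (ess_sup_on D f <= (fine (ess_sup_on D f) - eps)%:E)%E.
  apply: ereal_inf_lbound; exists (D `&` f @^-1` `]fine (ess_sup_on D f) - eps, +oo[).
  split => //; first by apply: mf => //; exact: measurable_itv.
  move=> s /= /not_implyP[Ds]; rewrite lee_fin => /negP; rewrite -ltNge => lt.
  by split => //; rewrite in_itv /= lt.
by rewrite -{1}(fineK ess_sup_on_fin_num) lee_fin; lra.
Qed.

End ess_sup_on_bounded.

Definition log_int_exp {R : realType} (D : set R) (f : R -> R) (k : R) : R :=
  k^-1 * ln (fine (\int[@lebesgue_measure R]_(s in D) (expR (k * f s))%:E)).

Lemma invr_ln_expRM {R : realType} (k y c : R) : 0 < k -> 0 < c ->
  k^-1 * ln (expR (k * y) * c) = y + k^-1 * ln c.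
Proof.
move=> k0 c0; rewrite lnM ?posrE ?expR_gt0 // expRK mulrDr mulrA.
by rewrite mulVf ?mul1r // gt_eqF.
Qed.

Section log_int_exp.
Variables (R : realType) (D : set R) (f : R -> R) (M : R).
Local Notation mu := (@lebesgue_measure R).
Hypothesis mD : measurable D.
Hypothesis muD_gt0 : (0 < mu D)%E.
Hypothesis muD_lty : (mu D < +oo)%E.
Hypothesis mf : measurable_fun D f.
Hypothesis f_bnd : {ae mu, forall s, D s -> `|f s| <= M}.

Local Notation esup := (fine (ess_sup_on D f)).
Local Notation J k := (\int[mu]_(s in D) (expR (k * f s))%:E)%E.

Let muDE : mu D = (fine (mu D))%:E.
Proof. by rewrite fineK // ge0_fin_numE ?measure_ge0. Qed.

Let muD_fine_gt0 : 0 < fine (mu D).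
Proof. by rewrite -lte_fin -muDE. Qed.

Let measurable_expR k : measurable_fun D (fun s => (expR (k * f s))%:E).
Proof. by apply/measurable_EFinP; apply: measurableT_comp => //; exact: measurable_funM. Qed.

Lemma integral_expR_le k : 0 <= k -> (J k <= (expR (k * esup) * fine (mu D))%:E)%E.
Proof.
move=> k0; rewrite EFinM -muDE -integral_cst //.
apply: ae_ge0_le_integral => //.
- exact: measurable_expR.
- by move=> s _; rewrite lee_fin expR_ge0.
- move: (ae_le_ess_sup_on mD muD_gt0 f_bnd); apply: filterS => s fe Ds.
  by rewrite lee_fin ler_expR ler_wpM2l // fe.
Qed.

Lemma integral_expR_ge k : 0 <= k -> ((expR (k * - M) * fine (mu D))%:E <= J k)%E.
Proof.
move=> k0; rewrite EFinM -muDE -integral_cst //.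
apply: ae_ge0_le_integral => //.
- by move=> s _; rewrite lee_fin expR_ge0.
- exact: measurable_expR.
- move: f_bnd; apply: filterS => s fM Ds.
  by rewrite lee_fin ler_expR ler_wpM2l //; move: (fM Ds); rewrite ler_norml => /andP[].
Qed.

Lemma integral_expR_ge_superlevel k (eps : R) : 0 <= k ->
  ((expR (k * (esup - eps)))%:E * mu (D `&` f @^-1` `](esup - eps)%R, +oo[) <= J k)%E.
Proof.
move=> k0; set A := D `&` _.
have mA : measurable A by apply: mf => //; exact: measurable_itv.
rewrite -integral_cst //.
apply: (@le_trans _ _ (\int[mu]_(s in A) (expR (k * f s))%:E)%E).
  apply: ge0_le_integral => //.
  - by move=> s _; rewrite lee_fin expR_ge0.
  - exact: measurable_funS mD (@subIsetl _ _ _) (measurable_expR k).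
  - rewrite /A => s [_ /=]; rewrite in_itv /= andbT => /ltW lt.
    by rewrite lee_fin ler_expR ler_wpM2l.
by apply: ge0_subset_integral => //; [exact: measurable_expR | exact: subIsetl].
Qed.

Let integral_expR_fin_num k : 0 < k -> J k \is a fin_num.
Proof.
move=> /ltW k0; rewrite fin_numElt (lt_le_trans _ (integral_expR_ge k0)) ?ltNyr //.
by rewrite (le_lt_trans (integral_expR_le k0)) ?ltry.
Qed.

Let integral_expR_gt0 k : 0 < k -> 0 < fine (J k).
Proof.
move=> k0; rewrite -lte_fin fineK ?integral_expR_fin_num //.
by apply: lt_le_trans (integral_expR_ge (ltW k0)); rewrite lte_fin mulr_gt0 ?expR_gt0.
Qed.

Let log_int_exp_le_of k c : 0 < k -> (J k <= c%:E)%E -> log_int_exp D f k <= k^-1 * ln c.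
Proof.
move=> k0 Jc; have J0 := integral_expR_gt0 k0.
have Jc' : fine (J k) <= c by rewrite -lee_fin fineK ?integral_expR_fin_num.
by rewrite ler_pM2l ?invr_gt0 // ler_ln ?posrE // (lt_le_trans J0 Jc').
Qed.

Let log_int_exp_ge_of k c : 0 < k -> 0 < c -> (c%:E <= J k)%E ->
  k^-1 * ln c <= log_int_exp D f k.
Proof.
move=> k0 c0 cJ; rewrite ler_pM2l ?invr_gt0 // ler_ln ?posrE ?integral_expR_gt0 //.
by rewrite -lee_fin fineK ?integral_expR_fin_num.
Qed.

Lemma log_int_exp_le k : 0 < k -> log_int_exp D f k <= esup + k^-1 * ln (fine (mu D)).
Proof.
move=> k0; rewrite -invr_ln_expRM //.
exact/log_int_exp_le_of/integral_expR_le/ltW.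
Qed.

Lemma log_int_exp_ge k : 0 < k -> - M + k^-1 * ln (fine (mu D)) <= log_int_exp D f k.
Proof.
move=> k0; rewrite -invr_ln_expRM //.
by apply: log_int_exp_ge_of => //; [rewrite mulr_gt0 ?expR_gt0 | exact/integral_expR_ge/ltW].
Qed.

Lemma log_int_exp_ge_superlevel k (eps : R) : 0 < k -> 0 < eps ->
  esup - eps + k^-1 * ln (fine (mu (D `&` f @^-1` `](esup - eps)%R, +oo[)))
  <= log_int_exp D f k.
Proof.
move=> k0 eps0; set A := D `&` _.
have muA_gt0 : (0 < mu A)%E by exact: (ess_sup_on_superlevel_gt0 mD muD_gt0 f_bnd mf eps0).
have muA_fin : mu A \is a fin_num.
  rewrite ge0_fin_numE ?measure_ge0 //; apply: le_lt_trans muD_lty.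
  by apply: le_measure; rewrite ?inE //; [apply: mf => //; exact: measurable_itv | exact: subIsetl].
rewrite -invr_ln_expRM //; last by rewrite -lte_fin fineK.
apply: log_int_exp_ge_of => //; first by rewrite mulr_gt0 ?expR_gt0 // -lte_fin fineK.
by rewrite EFinM fineK //; exact/integral_expR_ge_superlevel/ltW.
Qed.

Lemma cvg_log_int_exp : log_int_exp D f k @[k --> +oo] --> esup.
Proof.
apply/cvgrPdist_lt => d d0; pose eps := d / 2.
have eps0 : 0 < eps by rewrite divr_gt0.
pose m := fine (mu (D `&` f @^-1` `](esup - eps)%R, +oo[)).
have vanish c : \forall k \near +oo, `|k^-1 * c| < eps.
  near=> k; have k0 : 0 < k by near: k; apply: nbhs_pinfty_gt; rewrite num_real.
  rewrite normrM gtr0_norm ?invr_gt0 // mulrC ltr_pdivrMr // -ltr_pdivrMl //.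
  by near: k; apply: nbhs_pinfty_gt; rewrite num_real.
near=> k; have k0 : 0 < k by near: k; apply: nbhs_pinfty_gt; rewrite num_real.
have up := log_int_exp_le k0; have lo := log_int_exp_ge_superlevel k0 eps0; rewrite -/m in lo.
have /ltr_normlP[_ small_muD] : `|k^-1 * ln (fine (mu D))| < eps by near: k; exact: vanish.
have /ltr_normlP[small_m _] : `|k^-1 * ln m| < eps by near: k; exact: vanish.
by rewrite ltr_norml; apply/andP; split; rewrite /eps in lo small_muD small_m; lra.
Unshelve. all: by end_near.
Qed.

Lemma log_int_exp_bounded k : 1 <= k ->
  `|esup - log_int_exp D f k| <= 2 * M + `|ln (fine (mu D))|.
Proof.
move=> k1; have k0 : 0 < k by apply: lt_le_trans k1.
have up := log_int_exp_le k0; have lo := log_int_exp_ge k0.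
have /andP[Me eM] : - M <= esup <= M.
  by rewrite -!lee_fin fineK ?(ess_sup_on_fin_num mD muD_gt0 f_bnd) ?ess_sup_on_ge ?ess_sup_on_le.
have : `|k^-1 * ln (fine (mu D))| <= `|ln (fine (mu D))|.
  by rewrite normrM; apply: ler_piMl => //; rewrite gtr0_norm ?invr_gt0 // invf_le1.
by rewrite ler_norml => /andP[] *; rewrite ler_norml; apply/andP; split; lra.
Qed.

End log_int_exp.

Lemma cvg_powR_dist0 {R : realType} {T : Type} (F : set_system T) {FF : Filter F}
    (r : T -> R) (l p : R) : 0 < p ->
  r x @[x --> F] --> l -> `|l - r x| `^ p @[x --> F] --> 0.
Proof.
move=> p0 rl; apply/cvgrPdist_lt => d d0.
have dp0 : 0 < d `^ p^-1 by rewrite powR_gt0.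
have dE : (d `^ p^-1) `^ p = d by rewrite -powRrM mulVf ?gt_eqF // powRr1 // ltW.
move/cvgrPdist_lt: rl => /(_ _ dp0); apply: filterS => y ry.
rewrite sub0r normrN ger0_norm ?powR_ge0 // -dE.
by rewrite gt0_ltr_powR ?nnegrE ?powR_ge0.
Qed.

Section window_integral.
Variable R : realType.
Local Notation mu := (@lebesgue_measure R).

Lemma measurable_window_integral (tau : R) (g : R -> \bar R) :
  measurable_fun setT g -> (forall u, (0 <= g u)%E) ->
  measurable_fun setT (fun t : R => (\int[mu]_(u in `[(t - tau)%R, t]) g u)%E).
Proof.
move=> mg g0.
pose G (z : R * R) := ((\1_`[0, tau] (z.1 - z.2) : R)%:E * g z.2)%E.
have mG : measurable_fun setT G.
  apply: emeasurable_funM; last exact: measurableT_comp mg measurable_snd.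
  apply/measurable_EFinP; apply: (measurableT_comp (measurable_indic _)).
    exact: measurable_itv.
  by apply: measurable_funB; [exact: measurable_fst | exact: measurable_snd].
have G0 z : (0 <= G z)%E by rewrite mule_ge0 // lee_fin.
have -> : (fun t : R => (\int[mu]_(u in `[(t - tau)%R, t]) g u)%E) = fubini_F mu G.
  apply/funext => t; rewrite /fubini_F [LHS]integral_mkcond; apply: eq_integral => u _.
  rewrite /G patchE indicE /=.
  have -> : (t - u \in `[0, tau]%classic) = (u \in `[(t - tau)%R, t]%classic).
    by apply/idP/idP; rewrite !inE /= !in_itv /= => /andP[? ?]; apply/andP; split; lra.
  by case: ifPn => _; rewrite ?mul1e ?mul0e.
exact: measurable_fun_fubini_tonelli_F.
Qed.

Lemma measurable_LIE (k tau : R) (x : R -> R) :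
  measurable_fun setT x -> measurable_fun setT (LIE k tau x).
Proof.
move=> mx; apply: measurable_funM => //.
apply: measurableT_comp; first exact: measurable_ln.
apply: measurableT_comp; first exact: fine_measurable.
apply: measurable_window_integral => [|u]; last by rewrite lee_fin expR_ge0.
by apply/measurable_EFinP; apply: measurableT_comp => //; exact: measurable_funM.
Qed.

Lemma LIE_patch (k tau : R) (x : R -> R) (D : set R) (t : R) :
  `[t - tau, t] `<=` D -> LIE k tau (x \_ D) t = LIE k tau x t.
Proof.
move=> WD; rewrite /LIE; congr (_ * ln (fine _)).
by apply: eq_integral => u /[!inE] Wu; rewrite patchE mem_set //; exact: WD.
Qed.

End window_integral.

Lemma integrable_cst_itv {R : realType} (a b c : R) :
  (@lebesgue_measure R).-integrable `[a, b]%classic (cst c%:E).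
Proof.
apply/integrableP; split; first exact: measurable_cst.
rewrite (@eq_integral _ _ _ _ _ (cst `|c|%:E)) // integral_cst ?lebesgue_measure_itv //=.
by rewrite lte_mul_pinfty // lebesgue_measure_itv; case: ifP => _; rewrite -?EFinD ?ltry ?lt0y.
Qed.

Section LIE_cvg.
Variables (R : realType) (T tau : R) (x : R -> R) (M : R).
Local Notation mu := (@lebesgue_measure R).
Hypothesis tau_gt0 : 0 < tau.
Hypothesis mx : measurable_fun `]- tau, T[%classic x.
Hypothesis x_bnd : {ae mu, forall s, `]- tau, T[%classic s -> `|x s| <= M}.

Local Notation esup t := (fine (ess_sup_on `[0, tau] (seg x t))).

Let window_sub t : 0 <= t <= T -> `[t - tau, t]%classic `<=` `[- tau, T]%classic.
Proof.
by move=> /andP[? ?] u /=; rewrite !in_itv /= => /andP[? ?]; apply/andP; split; lra.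
Qed.

Let window_measure t : mu `[t - tau, t] = tau%:E.
Proof.
rewrite lebesgue_measure_itv /= lte_fin.
have -> : t - tau < t by rewrite ltrBlDr ltrDl.
by rewrite -EFinD opprB addrC subrK.
Qed.

Let measurable_window t : 0 <= t <= T -> measurable_fun `[t - tau, t] x.
Proof.
move=> t0T; apply: measurable_funS (window_sub t0T) _; first exact: measurable_itv.
exact: measurable_fun_itv_cc mx.
Qed.

Let bounded_window t : 0 <= t <= T ->
  {ae mu, forall s, `[t - tau, t]%classic s -> `|x s| <= M}.
Proof.
move=> t0T; move: (ae_itv_oo_cc x_bnd); apply: filterS => s xM Ws.
exact/xM/(window_sub t0T).
Qed.

Lemma cvg_LIE t : 0 <= t <= T -> LIE k tau x t @[k --> +oo] --> esup t.
Proof.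
move=> t0T; rewrite ess_sup_on_seg.
apply: (cvg_log_int_exp (measurable_itv _) _ _ (measurable_window t0T) (bounded_window t0T)).
  by rewrite window_measure lte_fin.
by rewrite window_measure ltry.
Qed.

Lemma LIE_bounded t k : 0 <= t <= T -> 1 <= k ->
  `|esup t - LIE k tau x t| <= 2 * M + `|ln tau|.
Proof.
move=> t0T k1; rewrite ess_sup_on_seg.
have muW_gt0 : (0 < mu `[(t - tau)%R, t]%classic)%E by rewrite window_measure lte_fin.
have muW_lty : (mu `[(t - tau)%R, t]%classic < +oo)%E by rewrite window_measure ltry.
have := log_int_exp_bounded (measurable_itv _) muW_gt0 muW_lty (measurable_window t0T).
by move=> /(_ _ (bounded_window t0T) _ k1); rewrite window_measure.
Qed.

Lemma measurable_LIE_on k : measurable_fun `[0, T] (LIE k tau x).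
Proof.
have mxT : measurable_fun setT (x \_ `[- tau, T]).
  apply/(measurable_restrictT _ _).1; first exact: measurable_itv.
  exact: measurable_fun_itv_cc mx.
apply: eq_measurable_fun (measurable_funS _ _ (measurable_LIE k tau mxT)) => //.
by move=> t /[!inE] /=; rewrite in_itv /= => t0T; apply/LIE_patch/window_sub.
Qed.

Lemma measurable_esup : measurable_fun `[0, T] (fun t => esup t).
Proof.
apply: (measurable_fun_cvg (h := fun n t => LIE n%:R tau x t)) => [n|t].
  exact: measurable_LIE_on.
by rewrite /= in_itv /= => /cvg_LIE/cvg_pinftyP; apply; exact: cvgr_idn.
Qed.

Lemma cvg_seq_integral_LIE (p : R) (u : R^nat) : 0 < p -> u n @[n --> \oo] --> +oo ->
  (\int[mu]_(t in `[0%R, T]%classic) ((`|esup t - LIE (u n) tau x t|) `^ p)%R%:E)%E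
    @[n --> \oo] --> 0%E.
Proof.
move=> p0 u_oo; pose v n := Num.max (u n) 1.
have v1 n : 1 <= v n by rewrite le_max lexx orbT.
have vu : \forall n \near \oo, v n = u n.
  by move/cvgryPge : u_oo => /(_ 1); apply: filterS => n /max_l.
have v_oo : v n @[n --> \oo] --> +oo.
  apply/cvgryPge => B; move/cvgryPge: u_oo => /(_ B); apply: filterS => n uB.
  by rewrite le_max uB.
pose C := 2 * M + `|ln tau|.
have measurable_dist n : measurable_fun `[0, T]%classic
    (fun t => ((`|esup t - LIE (v n) tau x t|) `^ p)%:E).
  apply/measurable_EFinP; apply: measurableT_comp (measurable_powR p) _.
  apply: measurableT_comp (@normr_measurable R setT) _.
  by apply: measurable_funB; [exact: measurable_esup | exact: measurable_LIE_on].
have cvg_dist t : `[0, T]%classic t ->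
    (fun n => ((`|esup t - LIE (v n) tau x t|) `^ p)%:E) @ \oo --> 0%E.
  rewrite /= in_itv /= => t0T; apply: cvg_EFin; first exact: nearW.
  by apply: cvg_powR_dist0 p0 _; move/cvg_pinftyP: (cvg_LIE t0T); apply.
have dominated n t : `[0, T]%classic t ->
    (`|((`|esup t - LIE (v n) tau x t|) `^ p)%:E| <= (C `^ p)%:E)%E.
  rewrite /= in_itv /= => t0T; have bnd := LIE_bounded t0T (v1 n).
  rewrite lee_fin ger0_norm ?powR_ge0 //.
  by apply: ge0_ler_powR; rewrite ?nnegrE ?(ltW p0) // (le_trans _ bnd).
have bound_fin t : `[0%R, T]%classic t -> cst (C `^ p)%:E t \is a fin_num by [].
have := dominated_cvg (mu := mu) (measurable_itv _) measurable_dist cvg_dist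
  bound_fin (integrable_cst_itv _ _ _) dominated.
rewrite integral0; apply: cvg_trans; apply: near_eq_cvg.
by move: vu; apply: filterS => n vun; rewrite /= vun.
Qed.

End LIE_cvg.

Theorem lemma4p4 (R : realType) (T tau : R) (x : R -> R)
  (hT : 0 < T) (htau : 0 < tau)
  (xmeas : measurable_fun `]- tau, T[%classic x)
  (xbnd : exists M : R,
     {ae (@lebesgue_measure R), forall s, `]- tau, T[%classic s -> `|x s| <= M})
  (p : R) (hp : 1 <= p) :
  (\int[@lebesgue_measure R]_(t in `[0%R, T]%classic)
      ((`| fine (ess_sup_on `[0%R, tau]%classic (seg x t)) - LIE k tau x t |)
         `^ p)%R%:E)%E
    @[k --> +oo] --> 0%E.
Proof.
case: xbnd => M x_bnd; apply/cvge_pinftyP => u u_oo.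
exact: (cvg_seq_integral_LIE htau xmeas x_bnd (lt_le_trans ltr01 hp) u_oo).
Qed.
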